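(* Let $S^1=\{z\in\mathbb{C}:|z|=1\}$, $\alpha\in(0,1)$, and $f:S^1\to S^1$, $f(z)=ze^{2\pi i\alpha}$. Let $\Delta$ be the partition of $S^1$ into orbits $\{f^k(z):k\in\mathbb{Z}\}$, $Y=S^1/\Delta$ with the quotient topology, and $p:S^1\to Y$ the projection. Then $p$ has property (CONT) for every $\alpha$, and $p$ has property (COMP) if and only if $\alpha$ is rational.
   Context: A $\Delta$-map is a continuous $h:S^1\to S^1$ mapping each element of $\Delta$ into some element of $\Delta$; $\mathrm{End}(S^1,\Delta)$ is the monoid of $\Delta$-maps, $\mathrm{End}(Y)=C(Y,Y)$, and $\psi(h)$ is the unique map with $p\circ h=\psi(h)\circ p$. Property (COMP): for every compact $L\subset Y$ there is a compact $K\subset S^1$ with $p(K)=L$. Property (CONT): $\psi:\mathrm{End}(S^1,\Delta)\to\mathrm{End}(Y)$ is continuous with respect to compact open topologies. *)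

From HB Require Import structures.
From mathcomp Require Import all_boot all_order all_algebra generic_quotient.
From mathcomp Require Import all_classical all_reals all_analysis.
From mathcomp Require Import ring lra.
Set Implicit Arguments. Unset Strict Implicit. Unset Printing Implicit Defensive.
Import Order.TTheory GRing.Theory Num.Theory.
Import numFieldNormedType.Exports.
Local Open Scope classical_set_scope.
Local Open Scope ring_scope.

Local Open Scope quotient_scope.
Section Circle.
Context {R : realType}.

(* The plane C is modelled as R * R (product topology), z = (Re z, Im z). *)
Definition S1set : set (R * R) := [set z | z.1 ^+ 2 + z.2 ^+ 2 = 1].

Local Notation S1 := (set_type S1set).

(* multiplication by e^{i t} on C = R * R *)
Definition rot (t : R) (z : R * R) : R * R :=
  (z.1 * cos t - z.2 * sin t, z.1 * sin t + z.2 * cos t).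

Lemma rot0 z : rot 0 z = z.
Proof. by case: z => x y; rewrite /rot /= sin0 cos0 !mulr0 !mulr1 subr0 add0r. Qed.

Lemma rotD s t z : rot s (rot t z) = rot (t + s) z.
Proof.
case: z => x y; rewrite /rot /= cosD sinD; congr pair; ring.
Qed.

Definition fpow (alpha : R) (k : int) (z : R * R) : R * R :=
  rot (2 * pi * k%:~R * alpha) z.

Definition orbit_rel (alpha : R) : rel S1 :=
  fun z w => `[< exists k : int, set_val w = fpow alpha k (set_val z) >].

Lemma orbit_rel_equiv (alpha : R) : equiv_class_of (orbit_rel alpha).
Proof.
split.
- by move=> z; apply/asboolP; exists 0; rewrite /fpow mulr0z mulr0 mul0r rot0.
- suff H : forall z w, orbit_rel alpha z w -> orbit_rel alpha w z.
    by move=> z w; apply/idP/idP => /H.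
  move=> z w /asboolP [k Hk]; apply/asboolP; exists (- k).
  rewrite Hk /fpow rotD (_ : _ + _ = 0) ?rot0 //.
  by rewrite mulrNz; ring.
- move=> w z v /asboolP [k Hk] /asboolP [l Hl]; apply/asboolP; exists (k + l).
  by rewrite Hl Hk /fpow rotD mulrzDr; congr rot; ring.
Qed.

Definition orbit_equiv (alpha : R) : equiv_rel S1 :=
  EquivRelPack (orbit_rel_equiv alpha).

Local Notation Yspace alpha := (quotient_topology {eq_quot (orbit_equiv alpha)}).

Definition proj (alpha : R) : S1 -> Yspace alpha := \pi_(Yspace alpha).

Definition delta_map (alpha : R) (h : S1 -> S1) : Prop :=
  forall z w : S1, orbit_rel alpha z w -> orbit_rel alpha (h z) (h w).

Definition EndDelta (alpha : R) : set {compact-open, S1 -> S1} :=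
  [set h | continuous (h : S1 -> S1) /\ delta_map alpha h].

(* psi(h): the map Y -> Y with p o h = psi(h) o p, i.e. [y] |-> p (h (repr y)) *)
Definition psi (alpha : R) (h : {compact-open, S1 -> S1})
  : {compact-open, Yspace alpha -> Yspace alpha} :=
  fun y => proj alpha (h (repr y)).

Definition CONT (alpha : R) : Prop :=
  {within (EndDelta alpha), continuous (@psi alpha)}.

Definition COMP (alpha : R) : Prop :=
  forall L : set (Yspace alpha), compact L ->
    exists K : set S1, compact K /\ proj alpha @` K = L.

End Circle.

(* Parametrizing S^1 by angles t |-> e(t) = e^{2 pi i t}, the orbit of e(t) is
   { e(t + g) | g in Z alpha + Z }.  The proof splits according to alpha:

   - alpha irrational: Z alpha + Z is dense in R (it has arbitrarily small positive
     elements, otherwise it would be cyclic and alpha rational), so every orbit is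
     dense and Y is indiscrete.  (CONT) then holds trivially, every subset of Y is
     compact, and (COMP) fails for L = Y \ {p(1)}: a compact lift K of L would
     cover R by countably many closed nowhere dense sets, against Baire's theorem.
   - alpha = n/d rational: every orbit has at most d points, so the saturated core
     {z | f^j z in W for all j < d} of an open W is open; hence p is a proper map
     (preimages of compact sets are compact), which gives (COMP) with K = p^-1(L)
     and (CONT) through the subbasic sets of the compact-open topology. *)

From Pilot Require Import Defs.
From HB Require Import structures.
From mathcomp Require Import all_boot all_order all_algebra generic_quotient.
From mathcomp Require Import all_classical all_reals all_analysis.
From mathcomp Require Import ring lra.
Set Implicit Arguments. Unset Strict Implicit. Unset Printing Implicit Defensive.
Import Order.TTheory GRing.Theory Num.Theory.
Import numFieldNormedType.Exports.
Local Open Scope classical_set_scope.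
Local Open Scope ring_scope.
Local Open Scope quotient_scope.

Local Notation proj := Defs.proj.
Local Notation rot := Defs.rot.

Lemma indiscrete_compact (T : topologicalType) :
  (forall U : set T, open U -> U = set0 \/ U = setT) -> forall A : set T, compact A.
Proof.
move=> indiscrete A F PF FA; have [y Ay] := filter_ex FA.
exists y; split => // B C FB; rewrite nbhsE => -[W [oW Wy] WC].
have [W0|WT] := indiscrete W oW; first by rewrite W0 in Wy.
have [b Bb] := filter_ex FB; exists b; split => //.
by apply: WC; rewrite WT.
Qed.

Lemma Baire_no_cover (R : realType) (A : nat -> set R) :
  (forall n, closed (A n)) -> (forall n, dense (~` A n)) -> exists t, forall n, ~ A n t.
Proof.
move=> clA dA.
have odA n : open (~` A n) /\ dense (~` A n) by split; [rewrite openC | exact: dA].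
have [t [_ At]] := Baire odA (ex_intro _ 0 I) openT.
by exists t => n; exact: At.
Qed.

Lemma floor_div (R : archiFieldType) (d x : R) :
  0 < d -> exists m : int, m%:~R * d <= x < m%:~R * d + d.
Proof.
move=> d_gt0; exists (Num.floor (x / d)).
have lo : (Num.floor (x / d))%:~R <= x / d := real_floor_le (num_real _).
have hi : x / d < (Num.floor (x / d) + 1)%:~R := real_floorD1_gt (num_real _).
rewrite ler_pdivlMr // in lo; rewrite ltr_pdivrMr // intrD mulrDl mul1r in hi.
by rewrite lo hi.
Qed.

Section Circle.
Context {R : realType}.
Local Notation S1 := (set_type (@S1set R)).
Local Notation Y alpha := (quotient_topology {eq_quot (@orbit_equiv R alpha)}).

Lemma proj_eqP alpha (z w : S1) : proj alpha z = proj alpha w <-> orbit_rel alpha z w.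
Proof. by split => [/eqmodP|/(@eqmodP _ (orbit_equiv alpha))]. Qed.

Lemma proj_repr alpha (y : Y alpha) : proj alpha (repr y) = y.
Proof. exact: reprK. Qed.

Lemma cos_sin_2pi_int (n : int) :
  cos (2 * pi * n%:~R) = 1 :> R /\ sin (2 * pi * n%:~R) = 0 :> R.
Proof.
have nat_turns (m : nat) : cos (2 * pi * m%:R) = 1 :> R /\ sin (2 * pi * m%:R) = 0 :> R.
  have -> : 2 * pi * m%:R = 0 + pi *+ 2 *+ m :> R by rewrite add0r mulr_natr mulr_natl.
  by rewrite (periodicn (@cosD2pi R)) (periodicn (@sinD2pi R)) cos0 sin0.
case: n => m; first exact: nat_turns.
by rewrite NegzE mulrNz mulrN cosN sinN; have [-> ->] := nat_turns m.+1; rewrite oppr0.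
Qed.

Lemma rot_continuous (t : R) : continuous (rot t).
Proof.
move=> z; apply: (@cvg_pair _ _ _ (nbhs z) (nbhs _) (nbhs _)).
- by apply: cvgB; apply: cvgM; (apply: cvg_cst || apply: cvg_fst || apply: cvg_snd).
- by apply: cvgD; apply: cvgM; (apply: cvg_cst || apply: cvg_fst || apply: cvg_snd).
Qed.

Lemma rot_S1 (t : R) (z : R * R) : S1set z -> S1set (rot t z).
Proof.
case: z => x y; rewrite /S1set /rot /= => xy1.
transitivity ((x ^+ 2 + y ^+ 2) * (cos t ^+ 2 + sin t ^+ 2)); first ring.
by rewrite xy1 cos2Dsin2 mulr1.
Qed.

Definition rotS (t : R) (z : S1) : S1 :=
  exist _ (rot t (val z)) (mem_set (@rot_S1 t (val z) (set_mem (valP z)))).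

Lemma rotSD (s t : R) (z : S1) : rotS s (rotS t z) = rotS (t + s) z.
Proof. by apply: val_inj; rewrite /= Defs.rotD. Qed.

Lemma rotS0 (z : S1) : rotS 0 z = z.
Proof. by apply: val_inj; rewrite /= Defs.rot0. Qed.

Lemma rotS_int (n : int) (z : S1) : rotS (2 * pi * n%:~R) z = z.
Proof.
have [c1 s0] := cos_sin_2pi_int n.
by apply: val_inj; case: z => -[x y] ?; rewrite /= /Defs.rot /= c1 s0 !mulr0 !mulr1 subr0 add0r.
Qed.

Lemma rotS_continuous (t : R) : continuous (rotS t).
Proof.
apply: (@continuous_comp_initial _ _ _ (@set_val _ (@S1set R))
  (rotS t : S1 -> initial_topology set_val)) => z.
exact: (continuous_comp (@initial_continuous _ _ _ z) (@rot_continuous t _)).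
Qed.

Definition fS (alpha : R) (k : int) : S1 -> S1 := rotS (2 * pi * k%:~R * alpha).

Lemma orbit_relP alpha (z w : S1) :
  orbit_rel alpha z w <-> exists k : int, w = fS alpha k z.
Proof.
split; first by move=> /asboolP [k hk]; exists k; apply: val_inj.
by move=> [k ->]; apply/asboolP; exists k.
Qed.

Lemma fSD alpha (k m : int) (z : S1) : fS alpha k (fS alpha m z) = fS alpha (k + m) z.
Proof. by rewrite /fS rotSD intrD; congr rotS; ring. Qed.

Lemma fS0 alpha (z : S1) : fS alpha 0 z = z.
Proof. by rewrite /fS mulr0 mul0r rotS0. Qed.

Lemma proj_fS alpha (k : int) (z : S1) : proj alpha (fS alpha k z) = proj alpha z.
Proof. by apply/proj_eqP/orbit_relP; exists (- k); rewrite fSD addNr fS0. Qed.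

Lemma fS_continuous alpha (k : int) : continuous (fS alpha k).
Proof. exact: rotS_continuous. Qed.

Lemma S1_one : @S1set R (1, 0).
Proof. by rewrite /S1set /= expr1n expr0n addr0. Qed.

Definition eS (t : R) : S1 := rotS (2 * pi * t) (exist _ (1, 0) (mem_set S1_one)).

Lemma eS_val (t : R) : val (eS t) = (cos (2 * pi * t), sin (2 * pi * t)).
Proof. by rewrite /= /Defs.rot /= !mul1r !mul0r subr0 addr0. Qed.

Lemma rotS_eS (a t : R) : rotS (2 * pi * a) (eS t) = eS (t + a).
Proof. by rewrite /eS rotSD; congr rotS; ring. Qed.

Lemma eS_int (t : R) (j : int) : eS (t + j%:~R) = eS t.
Proof. by rewrite -rotS_eS rotS_int. Qed.

Lemma fS_eS alpha (k : int) (t : R) : fS alpha k (eS t) = eS (t + k%:~R * alpha).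
Proof. by rewrite /fS -rotS_eS mulrA. Qed.

Lemma eS_continuous : continuous eS.
Proof.
apply: (@continuous_comp_initial _ _ _ (@set_val _ (@S1set R))
  (eS : R -> initial_topology set_val)) => t.
have -> : set_val \o (eS : R -> initial_topology set_val) =
    (fun t => (cos (2 * pi * t), sin (2 * pi * t))) by apply: funext => u; rewrite /= -eS_val.
have lin : (fun u : R => 2 * pi * u) @ t --> 2 * pi * t.
  by apply: cvgM; [exact: cvg_cst | exact: cvg_id].
apply: (@cvg_pair _ _ _ (nbhs t) (nbhs _) (nbhs _)).
- exact: (continuous_comp lin (@continuous_cos R _)).
- exact: (continuous_comp lin (@continuous_sin R _)).
Qed.

Lemma eS_shift_continuous (a : R) : continuous (fun t => eS (t + a)).
Proof.
move=> t; apply: continuous_comp; last exact: eS_continuous.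
by apply: cvgD; [exact: cvg_id | exact: cvg_cst].
Qed.

Lemma eS_surj (z : S1) : exists t, z = eS t.
Proof.
case: z => -[c s] zS; have := set_mem zS; rewrite /S1set /= => cs1.
have c_itv : -1 <= c <= 1 by apply/andP; split; nra.
have pi_gt0 := pi_gt0 R.
have cos_acos : cos (acos c) = c by apply: acosK; rewrite in_itv /= c_itv.
have sin_acos : sin (acos c) = `|s|.
  by rewrite sin_acos // -sqrtr_sqr; congr Num.sqrt; lra.
have angle (a : R) : 2 * pi * (a / (2 * pi)) = a.
  by rewrite mulrC divfK // gt_eqF // mulr_gt0.
have [s_ge0|s_lt0] := leP 0 s.
  exists (acos c / (2 * pi)); apply: val_inj.
  by rewrite eS_val angle cos_acos sin_acos ger0_norm.
exists (- acos c / (2 * pi)); apply: val_inj.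
by rewrite eS_val angle cosN sinN cos_acos sin_acos ltr0_norm // opprK.
Qed.

Lemma eS_inj_small (t s : R) : 0 < t - s < 1 / 2 -> eS t <> eS s.
Proof.
move=> /andP [ts_gt0 ts_lt] /(congr1 val); rewrite !eS_val => -[ct_cs st_ss].
have cos_diff : cos (2 * pi * t - 2 * pi * s) = 1.
  by rewrite cosB ct_cs st_ss -!expr2 cos2Dsin2.
have sin_diff : sin (2 * pi * t - 2 * pi * s) = 0.
  have := cos2Dsin2 (2 * pi * t - 2 * pi * s); rewrite cos_diff expr1n => h.
  by apply/eqP; rewrite -sqrf_eq0; apply/eqP; lra.
have : 0 < sin (2 * pi * t - 2 * pi * s).
  have pi_gt0 := pi_gt0 R.
  by apply: sin_gt0_pi; rewrite -mulrBr; apply/andP; split; nra.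
by rewrite sin_diff ltxx.
Qed.

Definition rational (alpha : R) : Prop := exists q : rat, alpha = ratr q.

(* The additive subgroup Z alpha + Z of R: the angles (in turns) of the orbit of 1. *)
Definition ZaZ (alpha : R) : set R :=
  [set g | exists k j : int, g = k%:~R * alpha + j%:~R].

Lemma ZaZB alpha g h : ZaZ alpha g -> ZaZ alpha h -> ZaZ alpha (g - h).
Proof.
move=> [k [j ->]] [k' [j' ->]]; exists (k - k'), (j - j').
by rewrite !intrB; ring.
Qed.

Lemma ZaZ1 alpha : ZaZ alpha 1.
Proof. by exists 0, 1; rewrite mul0r add0r. Qed.

Lemma ZaZ_alpha alpha : ZaZ alpha alpha.
Proof. by exists 1, 0; rewrite mul1r addr0. Qed.

Lemma ZaZMz alpha (m : int) g : ZaZ alpha g -> ZaZ alpha (m%:~R * g).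
Proof. by move=> [k [j ->]]; exists (m * k), (m * j); rewrite !intrM; ring. Qed.

Lemma ZaZ_gap_cyclic alpha (eps : R) : 0 < eps ->
  (forall g, ZaZ alpha g -> 0 < g -> eps <= g) ->
  exists s : R, forall g, ZaZ alpha g -> exists m : int, g = m%:~R * s.
Proof.
move=> eps_gt0 gap.
pose P := [set g | ZaZ alpha g /\ 0 < g].
have P_inf : has_inf P.
  split; first by exists 1; split; [exact: ZaZ1 | exact: ltr01].
  by exists 0 => g [_ /ltW].
have [s [Gs s_gt0] s_lt] := inf_adherent eps_gt0 P_inf.
exists s => g Gg; have [m /andP [lo hi]] := floor_div g s_gt0; exists m.
have Gr : ZaZ alpha (g - m%:~R * s) by apply: ZaZB => //; exact: ZaZMz.
have [r0|r_neq0] := eqVneq (g - m%:~R * s) 0; first by apply/eqP; rewrite -subr_eq0 r0.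
have r_gt0 : 0 < g - m%:~R * s by rewrite lt_neqAle eq_sym r_neq0 subr_ge0.
have inf_le_r : inf P <= g - m%:~R * s := ge_inf (proj2 P_inf) (conj Gr r_gt0).
have := gap _ (ZaZB Gs Gr); lra.
Qed.

Lemma ZaZ_small alpha : ~ rational alpha ->
  forall eps : R, 0 < eps -> exists2 d, ZaZ alpha d & 0 < d < eps.
Proof.
move=> irr eps eps_gt0; apply: contrapT => no_small.
have gap g : ZaZ alpha g -> 0 < g -> eps <= g.
  move=> Gg g_gt0; rewrite leNgt; apply/negP => g_lt.
  by apply: no_small; exists g => //; apply/andP.
have [s cyclic] := ZaZ_gap_cyclic eps_gt0 gap.
have [m1 one_eq] := cyclic 1 (ZaZ1 alpha).
have [m2 alpha_eq] := cyclic alpha (ZaZ_alpha alpha).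
have m1_neq0 : (m1%:~R : R) != 0 by apply: contra_eq_neq one_eq => ->; rewrite mul0r oner_neq0.
apply: irr; exists ((m2%:~R : rat) / m1%:~R); rewrite fmorph_div !rmorph_int.
have s_eq : s = (m1%:~R)^-1 by apply: (mulfI m1_neq0); rewrite mulfV // -one_eq.
by rewrite alpha_eq s_eq.
Qed.

Lemma ZaZ_dense alpha : ~ rational alpha -> dense (ZaZ alpha).
Proof.
move=> irr O [x Ox] /[dup] oO /(_ x Ox) /nbhs_ballP [eps eps_gt0 ball_O].
have [d Gd /andP [d_gt0 d_lt]] := ZaZ_small irr eps_gt0.
have [m /andP [lo hi]] := floor_div x d_gt0.
exists (m%:~R * d); split; last exact: ZaZMz.
by apply: ball_O; rewrite /ball /= ger0_norm; lra.
Qed.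

Lemma orbit_meets_open alpha : ~ rational alpha ->
  forall (V : set S1) (z w : S1), open V -> V z -> exists k : int, V (fS alpha k w).
Proof.
move=> irr V z w oV; have [t0 ->] := eS_surj z; have [tw ->] := eS_surj w => Vt0.
have oVw : open [set g | V (eS (g + tw))].
  by move/continuousP: (@eS_shift_continuous tw); apply.
have Vt0' : [set g | V (eS (g + tw))] (t0 - tw) by rewrite /= subrK.
have [g [Vg [k [j g_eq]]]] := ZaZ_dense irr (ex_intro _ _ Vt0') oVw.
by exists k; rewrite fS_eS -(eS_int _ j) -addrA addrC -g_eq.
Qed.

Lemma Y_indiscrete alpha : ~ rational alpha ->
  forall U : set (Y alpha), open U -> U = set0 \/ U = setT.
Proof.
move=> irr U oU; have [->|/set0P [y Uy]] := eqVneq U set0; [by left | right].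
apply/seteqP; split => // y' _; rewrite -(@proj_repr alpha y').
have Uy0 : (proj alpha @^-1` U) (repr y) by rewrite /= proj_repr.
have [k Uk] := orbit_meets_open irr (repr y') oU Uy0.
by rewrite -(proj_fS alpha k).
Qed.

(* Preimages of compact subsets of S^1 under continuous maps are closed:
   their images in the Hausdorff plane are compact, hence closed. *)
Lemma closed_preimage_compact (T : topologicalType) (f : T -> S1) (K : set S1) :
  continuous f -> compact K -> closed (f @^-1` K).
Proof.
move=> f_cont cK.
have val_cont : continuous (set_val : S1 -> R * R) by exact: initial_continuous.
have cK' : compact (set_val @` K : set (R * R)).
  by apply: continuous_compact => //; exact: continuous_subspaceT.
have clK' : closed (set_val @` K : set (R * R)).
  by apply: compact_closed => //; exact: norm_hausdorff.
have -> : f @^-1` K = (set_val \o f) @^-1` (set_val @` K).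
  apply/seteqP; split => t /=; first by exists (f t).
  by move=> [z Kz /val_inj <-].
have comp_cont : continuous (set_val \o f).
  by move=> t; exact: (continuous_comp (f_cont t) (val_cont (f t))).
by move/continuous_closedP: comp_cont; apply.
Qed.

Lemma eS_fiber_nowhere_dense (z : S1) : dense (~` (eS @^-1` [set z])).
Proof.
move=> O [t0 Ot0] oO; have [t0_fib|t0_nfib] := pselect (eS t0 = z); last by exists t0.
have /nbhs_ballP [del del_gt0 ball_O] : nbhs t0 O by exact: open_nbhs_nbhs.
pose m := Num.min del (1 / 2).
have m_gt0 : 0 < m by rewrite lt_min del_gt0; lra.
have m_del : m <= del by rewrite ge_min lexx.
have m_half : m <= 1 / 2 by rewrite ge_min lexx orbT.
pose e := m / 2.
have [e_gt0 e_del e_half] : [/\ 0 < e, e < del & e < 1 / 2] by rewrite /e; split; lra.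
exists (t0 + e); split.
  by apply: ball_O; rewrite /ball /= opprD addNKr normrN ger0_norm // ltW.
rewrite /= -t0_fib; apply: eS_inj_small; rewrite addrAC subrr add0r; lra.
Qed.

Lemma psi_proj alpha (h : {compact-open, S1 -> S1}) (z : S1) :
  delta_map alpha h -> @psi R alpha h (proj alpha z) = proj alpha (h z).
Proof.
move=> h_delta; apply/proj_eqP/h_delta/proj_eqP.
by rewrite proj_repr.
Qed.

Lemma CONT_of_subbasic alpha :
  (forall h : {compact-open, S1 -> S1}, EndDelta alpha h ->
    forall K W : set (Y alpha), compact K -> open W ->
    @psi R alpha h @` K `<=` W -> nbhs h [set g | @psi R alpha g @` K `<=` W]) ->
  CONT alpha.
Proof.
move=> subbasic; apply: continuous_in_subspaceT => h /set_mem End_h.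
have psi_filter : Filter (@psi R alpha @ nbhs h) by exact: fmap_filter.
apply/(compact_open_cvgP _ psi_filter) => K W cK oW.
exact: subbasic.
Qed.

(* For irrational alpha, (CONT) holds because Y is indiscrete. *)
Lemma CONT_irrational alpha : ~ rational alpha -> CONT alpha.
Proof.
move=> irr; apply: CONT_of_subbasic => h _ K W _ oW hKW.
apply: filterS (@filterT _ (nbhs h) _) => g _.
have [W0|->] := Y_indiscrete irr oW; last by [].
have K0 : K = set0.
  apply/seteqP; split => // y Ky.
  have Wy : W (@psi R alpha h y) by apply: hKW; exists y.
  by rewrite W0 in Wy.
by rewrite K0 /= image_set0.
Qed.

(* Y minus the class of 1 is compact (Y is
   indiscrete); if K were a compact lift of it, the real line would be covered by
   the countably many closed sets {t | e(t + k alpha) in K} and {t | e(t) = e(k alpha)},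
   each with dense complement, contradicting Baire's theorem. *)
Lemma COMP_irrational alpha : ~ rational alpha -> ~ COMP alpha.
Proof.
move=> irr comp.
pose L : set (Y alpha) := [set y | y <> proj alpha (eS 0)].
have cL : compact L := indiscrete_compact (fun U oU => Y_indiscrete irr oU) (A:=L).
have [K [cK KL]] := comp L cL.
have K_off_ZaZ t : ZaZ alpha t -> ~ K (eS t).
  move=> [k [j ->]] Kt; have : L (proj alpha (eS (k%:~R * alpha))).
    by rewrite -KL; exists (eS (k%:~R * alpha + j%:~R)) => //; rewrite eS_int.
  by rewrite -(add0r (k%:~R * alpha)) -fS_eS proj_fS.
pose C (k : int) := [set t | K (eS (t + k%:~R * alpha))].
pose D (k : int) := eS @^-1` [set eS (k%:~R * alpha)].
have cover t : exists k, C k t \/ D k t.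
  have [t_orb|t_off] := pselect (proj alpha (eS t) = proj alpha (eS 0)).
    have /proj_eqP/orbit_relP [k t_eq] := esym t_orb.
    by exists k; right; rewrite /D /= t_eq fS_eS add0r.
  have : L (proj alpha (eS t)) := t_off.
  rewrite -KL => -[w Kw /esym/proj_eqP/orbit_relP [k w_eq]].
  by exists k; left; rewrite /C /= -fS_eS -w_eq.
have C_closed k : closed (C k) := closed_preimage_compact (@eS_shift_continuous _) cK.
have D_closed k : closed (D k).
  exact: (closed_preimage_compact eS_continuous (@compact_set1 S1 _)).
have C_nowhere_dense k : dense (~` C k).
  move=> W W0 oW; have [t [Wt Gt]] := ZaZ_dense irr W0 oW.
  exists t; split => //; apply: K_off_ZaZ.
  by case: Gt => m [j ->]; exists (m + k), j; rewrite intrD; ring.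
have D_nowhere_dense k : dense (~` D k) := eS_fiber_nowhere_dense _.
pose A n := let k := odflt 0 (unpickle n) in C k `|` D k.
have [|t t_off] := @Baire_no_cover R A (fun n => closedU (C_closed _) (D_closed _)).
  by move=> n; rewrite /A setCU; apply: denseI; rewrite ?openC.
have [k Ck_Dk] := cover t.
by apply: (t_off (pickle k)); rewrite /A /= pickleK.
Qed.

Section Rational.
Variables (alpha : R) (q : rat).
Hypothesis alpha_q : alpha = ratr q.

(* For alpha = n / d every orbit has at most d points: f^d is the identity. *)
Let d : nat := `|denq q|%N.

Lemma d_gt0 : (0 < d)%N.
Proof. by rewrite absz_gt0 gt_eqF // denq_gt0. Qed.

Lemma fS_period (k m : int) (z : S1) : fS alpha (k + m * d%:Z) z = fS alpha k z.
Proof.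
have d_alpha : d%:~R * alpha = (numq q)%:~R :> R.
  have := congr1 (@ratr R) (numqE q); rewrite rmorphM !rmorph_int => nq.
  by rewrite /d gez0_abs ?ltW ?denq_gt0 // nq alpha_q mulrC.
rewrite /fS [X in rotS X](_ : _ = 2 * pi * k%:~R * alpha + 2 * pi * (m * numq q)%:~R).
  by rewrite -rotSD rotS_int.
by rewrite !intrD !intrM -d_alpha; ring.
Qed.

Lemma fS_mod (k : int) (z : S1) : exists j : 'I_d, fS alpha k z = fS alpha j z.
Proof.
have d_neq0 : d%:Z != 0 by rewrite eqz_nat -lt0n d_gt0.
have mod_lt : (`|(k %% d%:Z)%Z| < d)%N.
  by rewrite -ltz_nat gez0_abs ?modz_ge0 // ltz_mod.
exists (Ordinal mod_lt); rewrite /= gez0_abs ?modz_ge0 //.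
by rewrite {1}(divz_eq k d%:Z) addrC fS_period.
Qed.

Definition core (W : set S1) : set S1 := [set z | forall j : 'I_d, W (fS alpha j z)].

Lemma core_sub (W : set S1) : core W `<=` W.
Proof. by move=> z /(_ (Ordinal d_gt0)); rewrite fS0. Qed.

Lemma core_saturated (W : set S1) (z w : S1) : orbit_rel alpha z w -> core W z -> core W w.
Proof.
move=> /orbit_relP [m ->] Wz j; rewrite fSD.
by have [i ->] := fS_mod (j%:Z + m) z; exact: Wz.
Qed.

Lemma core_open (W : set S1) : open W -> open (core W).
Proof.
rewrite !openE => oW z Wz.
apply: (@filter_forall S1 'I_d (fun j x => W (fS alpha j x)) (nbhs z)) => j.
exact: (@fS_continuous alpha j z) (oW _ (Wz j)).
Qed.

Lemma proj_core_open (W : set S1) : open W -> open (proj alpha @` core W : set (Y alpha)).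
Proof.
move=> oW; suff : open (proj alpha @^-1` (proj alpha @` core W)) by [].
have -> : proj alpha @^-1` (proj alpha @` core W) = core W.
  apply/seteqP; split => [w [v Wv /proj_eqP vw]|w Ww]; last by exists w.
  exact: core_saturated vw Wv.
exact: core_open.
Qed.

(* Since orbits are finite, p is a proper map: preimages of compact sets are compact.
   A proper filter on p^-1(L) has an image clustering at some y in L; if no point of
   the orbit of repr y were a cluster point, the saturated core of the union of the
   escaping neighbourhoods would give a neighbourhood of y avoided by the image filter. *)
Lemma proj_preimage_compact (L : set (Y alpha)) : compact L -> compact (proj alpha @^-1` L).
Proof.
move=> cL F PF FL.
have [y [Ly y_cluster]] := cL _ (fmap_proper_filter (proj alpha) PF) FL.
apply: contrapT => no_cluster.
have escape (j : 'I_d) : exists B : set S1, [/\ open B, B (fS alpha j (repr y)) & F (~` B)].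
  apply: contrapT => no_escape; apply: no_cluster.
  exists (fS alpha j (repr y)); split; first by rewrite /= proj_fS proj_repr.
  move=> A B FA; rewrite nbhsE => -[U [oU Uz] UB]; apply: contrapT => AB0.
  apply: no_escape; exists U; split => //.
  by apply: filterS FA => a Aa Ua; apply: AB0; exists a; split => //; exact: UB.
have [B B_escape] := choice escape.
pose W := \bigcup_(j in [set: 'I_d]) B j.
have oW : open W by apply: bigcup_open => j _; have [] := B_escape j.
have F_offW : F (~` W).
  have : \forall x \near F, forall j : 'I_d, ~ B j x.
    by apply: filter_forall => j; have [] := B_escape j.
  by apply: filterS => x offB [j _ Bx]; exact: offB j Bx.
have y_core : core W (repr y) by move=> j; exists j => //; have [] := B_escape j.
have y_nbhs : nbhs y (proj alpha @` core W).
  by apply: open_nbhs_nbhs; split; [exact: proj_core_open | exists (repr y); rewrite ?proj_repr].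
have F_img : F (proj alpha @^-1` (proj alpha @` (~` W))).
  by apply: filterS F_offW => x offW; exists x.
have [_ [[w offW <-] [v v_core /proj_eqP vw]]] := y_cluster _ _ F_img y_nbhs.
exact: offW (core_sub (core_saturated vw v_core)).
Qed.


(* For rational alpha, (CONT) holds: the subbasic set {g | psi(g)(K) c W} contains the
   compact-open neighbourhood {g | g(p^-1 K) c p^-1 W} of h. *)
Lemma CONT_rational : CONT alpha.
Proof.
apply: CONT_of_subbasic => h [_ h_delta] K W cK oW hKW.
have h_lift : h @` (proj alpha @^-1` K) `<=` proj alpha @^-1` W.
  by move=> _ [z Kz <-]; rewrite /= -psi_proj //; apply: hKW; exists (proj alpha z).
have : nbhs h [set g : {compact-open, S1 -> S1} |
    g @` (proj alpha @^-1` K) `<=` proj alpha @^-1` W].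
  have oW' : open (proj alpha @^-1` W) := oW.
  by apply: open_nbhs_nbhs; split; [exact: compact_open_open (proj_preimage_compact cK) oW' |].
apply: filterS => g g_lift _ [y Ky <-].
by apply: (g_lift (g (repr y))); exists (repr y); rewrite /= ?proj_repr.
Qed.

Lemma COMP_rational : COMP alpha.
Proof.
move=> L cL; exists (proj alpha @^-1` L); split; first exact: proj_preimage_compact.
by apply/seteqP; split => [_ [z Lz <-] //|y Ly]; exists (repr y); rewrite /= proj_repr.
Qed.

End Rational.

End Circle.

Theorem mainTheorem11 (R : realType) (alpha : R) :
  0 < alpha < 1 ->
  CONT alpha /\ (COMP alpha <-> exists q : rat, alpha = ratr q).
Proof.
move=> _; have [[q alpha_q]|irr] := pselect (rational alpha).
  split; first exact: CONT_rational alpha_q.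
  by split => _; [exists q | exact: COMP_rational alpha_q].
split; first exact: CONT_irrational.
by split => // comp; exfalso; exact: COMP_irrational irr comp.
Qed.
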